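(* Let $G$ be a permutation graph or a near-permutation graph on $n$ vertices whose odd girth equals $\frac{n}{2}$. If $G$ is not $3$-edge-colourable, then $G$ is isomorphic to the Petersen graph or to the Petersen graph minus one edge.
   Context: All graphs are finite and simple. A cubic graph $G$ on $n$ vertices is a permutation graph if $G$ has a perfect matching $M$ such that $G-M$ (deleting the edges of $M$) is the disjoint union of two chordless cycles $A$ and $B$, each of length $\frac{n}{2}$. A near-permutation graph is a graph obtained from such a permutation graph by deleting one edge of the perfect matching $M$. The odd girth of a graph is the length of a shortest odd cycle. A graph is $3$-edge-colourable if it admits a proper edge-colouring with $3$ colours. *)

From mathcomp Require Import all_boot.
Set Implicit Arguments. Unset Strict Implicit. Unset Printing Implicit Defensive.

Section Graphs.
Variable T : finType.

Definition simple_graph (e : rel T) : Prop := symmetric e /\ irreflexive e.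

Definition cubic (e : rel T) : Prop := forall x : T, #|[set y | e x y]| = 3.

Definition perfect_matching (e m : rel T) : Prop :=
  [/\ symmetric m, (forall x y, m x y -> e x y) & forall x : T, #|[set y | m x y]| = 1].

Definition cyc_adj (c : seq T) (x y : T) : bool :=
  [&& x \in c, y \in c & (next c x == y) || (next c y == x)].

(* e with matching m, and A, B witnessing that e - m is the disjoint union of the
   two (chordless) cycles A and B, each of length n/2 where n = #|T| *)
Definition perm_structure (e m : rel T) (A B : seq T) : Prop :=
  [/\ simple_graph e, cubic e, perfect_matching e m &
      [/\ uniq A, uniq B, 3 <= size A, size A = #|T| %/ 2 & size B = #|T| %/ 2] /\
      (forall x : T, (x \in A) != (x \in B)) /\
      (forall x y : T, (e x y && ~~ m x y) = cyc_adj A x y || cyc_adj B x y)].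

Definition permutation_graph (e : rel T) : Prop :=
  exists (m : rel T) (A B : seq T), perm_structure e m A B.

Definition near_permutation_graph (e : rel T) : Prop :=
  exists (e0 m : rel T) (A B : seq T) (u v : T),
    [/\ perm_structure e0 m A B, m u v &
        forall x y : T,
          e x y = e0 x y && ~~ (((x == u) && (y == v)) || ((x == v) && (y == u)))].

Definition is_cycle_of (e : rel T) (c : seq T) : bool :=
  [&& uniq c, 3 <= size c & cycle e c].

Definition odd_girth (e : rel T) (k : nat) : Prop :=
  (exists c, is_cycle_of e c /\ odd (size c) /\ size c = k) /\
  (forall c, is_cycle_of e c -> odd (size c) -> k <= size c).

Definition three_edge_colourable (e : rel T) : Prop :=
  exists col : T -> T -> 'I_3,
    (forall x y, e x y -> col x y = col y x) /\
    (forall x y z, e x y -> e x z -> y != z -> col x y != col x z).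

End Graphs.

Definition graph_iso (T U : finType) (e : rel T) (f : rel U) : Prop :=
  exists g : T -> U, bijective g /\ forall x y, f (g x) (g y) = e x y.

(* Petersen graph on 'I_10: outer 5-cycle 0..4, spokes i -- i+5,
   inner pentagram 5-7-9-6-8-5 *)
Definition petersen_edges : seq (nat * nat) :=
  [:: (0,1); (1,2); (2,3); (3,4); (4,0);
      (0,5); (1,6); (2,7); (3,8); (4,9);
      (5,7); (7,9); (9,6); (6,8); (8,5)].

Definition petersen : rel 'I_10 :=
  fun x y => ((nat_of_ord x, nat_of_ord y) \in petersen_edges)
          || ((nat_of_ord y, nat_of_ord x) \in petersen_edges).

Definition petersen_minus (u v : 'I_10) : rel 'I_10 :=
  fun x y => petersen x y && ~~ (((x == u) && (y == v)) || ((x == v) && (y == u))).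

From mathcomp Require Import all_boot zify.
Set Implicit Arguments. Unset Strict Implicit. Unset Printing Implicit Defensive.

(* Write the two rims as [a i] on [A] and [b j] on [B], indices mod [L = n/2],
   which is odd because it is the odd girth.  A surviving matching edge with
   both ends on one rim would close, with one of the two arcs it cuts off, an
   odd cycle shorter than [L]; a counting argument then shows that every
   matching edge is a spoke [a i -- b (s i)].  For two consecutive surviving
   spokes, with gap [d = s (i+1) - s i mod L], the rims close cycles of
   lengths [L - d + 3] and [d + 3], so the odd girth forces
   [d \in {1, 3, L - 3, L - 1}]; gaps [1] and [L - 1] give an even
   Hamiltonian cycle, hence a 3-edge-colouring.  Consecutive gaps never add
   up to [L], and for [L >= 7] two equal gaps close an odd cycle of length
   [L - 2].  Hence [L = 5], all gaps are equal to [2] or [3], and the spokes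
   draw the Petersen graph, minus the deleted spoke if there is one. *)

Lemma index_next (T : eqType) (s : seq T) x : uniq s -> x \in s ->
  index (next s x) s = (index x s).+1 %% size s.
Proof.
case: s => [//|y s] s_uniq xs; rewrite next_nth xs.
have [lt_xs|ge_xs] := ltnP (index x (y :: s)) (size s).
  by rewrite -[nth y s _]/(nth y (y :: s) _.+1) index_uniq //= modn_small.
have -> : index x (y :: s) = size s.
  by move: xs; rewrite -index_mem -[size (y :: s)]/(size s).+1; lia.
by rewrite nth_default //= eqxx modnn.
Qed.

Lemma uniq_card_mem (T : finType) (s : seq T) x :
  uniq s -> size s = #|T| -> x \in s.
Proof.
move=> s_uniq s_size.
have [|_ /(_ x) ->] := uniq_min_size s_uniq (fun y _ => mem_enum T y).
  by rewrite -cardT s_size.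
by rewrite mem_enum.
Qed.

Lemma odd_succ_mod n k : ~~ odd n -> k < n -> odd (k.+1 %% n) = ~~ odd k.
Proof.
move=> n_even lt_kn; have [lt_k1n|ge_k1n] := ltnP k.+1 n; first by rewrite modn_small.
have n_eq : n = k.+1 by lia.
by move: n_even; rewrite n_eq modnn /= negbK => ->.
Qed.

Lemma addn_eq_mod_small i j n : 0 < j < n -> (i + j == i %[mod n]) = false.
Proof.
move=> /andP[j_gt0 lt_jn]; rewrite -{2}[i]addn0 eqn_modDl mod0n modn_small //.
by case: j j_gt0 {lt_jn}.
Qed.

Lemma residues_mod5 c x d : c < 5 -> x < 5 -> 0 < d < 5 ->
  (forall s, s <= 3 -> x != (c + s * d) %% 5) -> x = (c + 4 * d) %% 5.
Proof.
move=> lt_c lt_x /andP[d_gt0 lt_d] x_neq.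
move: (x_neq 0 isT) (x_neq 1 isT) (x_neq 2 isT) (x_neq 3 isT); clear x_neq.
case: c lt_c => [|[|[|[|[|c]]]]] // _; case: x lt_x => [|[|[|[|[|x]]]]] // _;
  by case: d d_gt0 lt_d => [|[|[|[|[|d]]]]].
Qed.

Section EvenHamiltonianCycle.
Variables (T : finType) (e : rel T) (H : seq T).
Hypotheses (e_sym : symmetric e) (e_deg : forall x, #|[set y | e x y]| <= 3).
Hypotheses (H_uniq : uniq H) (H_all : forall x, x \in H) (H_cycle : cycle e H).
Hypotheses (H_even : ~~ odd (size H)) (H_size : 3 <= size H).

Let parity x := odd (index x H).

Lemma parity_next x : parity (next H x) = ~~ parity x.
Proof. by rewrite /parity index_next // odd_succ_mod // index_mem. Qed.

Lemma next_next_neq x : next H (next H x) != x.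
Proof.
apply/eqP => /(congr1 (index^~ H)); rewrite !index_next ?mem_next //.
have lt_x : index x H < size H by rewrite index_mem.
rewrite -[X in X %% _ = _]addn1 modnDml addn1 -addn2 -{2}(modn_small lt_x).
by move=> /eqP; rewrite -{2}[index x H]addn0 eqn_modDl mod0n modn_small.
Qed.

Lemma prev_neq_next x : prev H x != next H x.
Proof.
by apply: contraNneq (next_next_neq (prev H x)) => E; rewrite (next_prev H_uniq) E.
Qed.

Lemma next_eq_prev x y : (x == next H y) = (y == prev H x).
Proof.
by apply/eqP/eqP => [->|->]; rewrite ?(prev_next H_uniq) ?(next_prev H_uniq).
Qed.

Definition ham_colour x y : nat :=
  if y == next H x then parity x : nat else if x == next H y then parity y : nat else 2.

Lemma ham_colour_sym x y : ham_colour x y = ham_colour y x.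
Proof.
rewrite /ham_colour; case: (y =P next H x) => [yE|] //; case: (x =P next H y) => // xE.
by move: (next_next_neq x); rewrite -yE -xE eqxx.
Qed.

Lemma ham_colourE x y : ham_colour x y =
  if y == next H x then parity x : nat else if y == prev H x then ~~ parity x : nat else 2.
Proof.
rewrite /ham_colour [x == _]next_eq_prev; case: (y =P prev H x) => [->|//].
by have := parity_next (prev H x); rewrite (next_prev H_uniq) => ->; rewrite negbK.
Qed.

Lemma at_most_one_chord x y z : e x y -> e x z -> y != z ->
  (y \in [:: next H x; prev H x]) || (z \in [:: next H x; prev H x]).
Proof.
move=> exy exz neq_yz; apply/negPn/negP; rewrite negb_or !inE !negb_or.
move=> /andP[/andP[ny py] /andP[nz pz]].
have nbrs : uniq [:: next H x; prev H x; y; z].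
  rewrite /= !inE !negb_or eq_sym prev_neq_next !(eq_sym _ y) !(eq_sym _ z).
  by rewrite ny py nz pz eq_sym neq_yz.
have sub : [:: next H x; prev H x; y; z] \subset [set w | e x w].
  apply/subsetP => w; rewrite !inE => /or4P[] /eqP -> //.
  - exact: next_cycle H_cycle (H_all x).
  - by rewrite e_sym; exact: prev_cycle H_cycle (H_all x).
by have := leq_trans (subset_leq_card sub) (e_deg x); rewrite (card_uniqP nbrs).
Qed.

Lemma even_hamiltonian_colourable : three_edge_colourable e.
Proof.
exists (fun x y => inord (ham_colour x y)); split=> [x y _|x y z exy exz neq_yz].
  by rewrite ham_colour_sym.
have lt3 w : ham_colour x w < 3 by rewrite ham_colourE; do 2?case: ifP; case: parity.
apply: contraTneq (at_most_one_chord exy exz neq_yz) => /(congr1 val).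
rewrite /= !inordK // !ham_colourE !inE; move: neq_yz.
have /eqP prev_next_neq := prev_neq_next x.
case: (y =P next H x) => yn; case: (y =P prev H x) => yp;
  case: (z =P next H x) => zn; case: (z =P prev H x) => zp //=; try by case: parity.
all: by move=> /eqP neq_yz _; congruence.
Qed.

End EvenHamiltonianCycle.

Section CyclicNth.
Variables (T : finType) (x0 : T) (s : seq T).
Hypotheses (s_uniq : uniq s) (s_gt0 : 0 < size s).

Definition cyc_nth i := nth x0 s (i %% size s).

Lemma mem_cyc_nth i : cyc_nth i \in s.
Proof. by rewrite mem_nth // ltn_pmod. Qed.

Lemma cyc_nth_mod i : cyc_nth (i %% size s) = cyc_nth i.
Proof. by rewrite /cyc_nth modn_mod. Qed.

Lemma index_cyc_nth i : index (cyc_nth i) s = i %% size s.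
Proof. by rewrite index_uniq // ltn_pmod. Qed.

Lemma cyc_nth_index x : x \in s -> cyc_nth (index x s) = x.
Proof. by move=> xs; rewrite /cyc_nth modn_small ?index_mem // nth_index. Qed.

Lemma cyc_nth_eq i j : (cyc_nth i == cyc_nth j) = (i == j %[mod size s]).
Proof.
apply/eqP/eqP => [/(congr1 (index^~ s))|ij]; first by rewrite !index_cyc_nth.
by rewrite -cyc_nth_mod ij cyc_nth_mod.
Qed.

Lemma next_cyc_nth i : next s (cyc_nth i) = cyc_nth i.+1.
Proof.
have next_in : next s (cyc_nth i) \in s by rewrite mem_next mem_cyc_nth.
apply/eqP; rewrite -(cyc_nth_index next_in) cyc_nth_eq index_next ?mem_cyc_nth //.
by rewrite index_cyc_nth modn_mod -addn1 modnDml addn1.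
Qed.

Lemma cyc_adj_cyc_nth i j :
  cyc_adj s (cyc_nth i) (cyc_nth j) = (cyc_nth i.+1 == cyc_nth j) || (cyc_nth j.+1 == cyc_nth i).
Proof. by rewrite /cyc_adj !mem_cyc_nth !next_cyc_nth. Qed.

End CyclicNth.

Section Rings.
Variables (T : finType) (e : rel T) (L : nat).
Hypotheses (e_sym : symmetric e) (L_gt0 : 0 < L).

(* [f] winds periodically around an [L]-cycle of [e]. *)
Definition is_ring (f : nat -> T) :=
  [/\ forall k, f (k %% L) = f k, forall i j, f i = f j -> i = j %[mod L]
    & forall k, e (f k) (f k.+1)].

Variable f : nat -> T.
Hypothesis f_ring : is_ring f.

Lemma ring_mod k : f (k %% L) = f k.
Proof. by case: f_ring. Qed.

Lemma ring_addL k : f (k + L) = f k.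
Proof. by case: f_ring => f_mod _ _; rewrite -f_mod modnDr f_mod. Qed.

Lemma ring_shift i j n : f i = f j -> f (i + n) = f (j + n).
Proof.
by case: f_ring => f_mod f_inj _ /f_inj ij; rewrite -f_mod -[f (j + n)]f_mod -modnDml ij modnDml.
Qed.

Definition rev_ring c k := f (c + (L - k %% L)).

Lemma rev_ring0 c : rev_ring c 0 = f c.
Proof. by rewrite /rev_ring mod0n subn0 ring_addL. Qed.

Lemma rev_ring_small c k : k < L -> rev_ring c k = f (c + (L - k)).
Proof. by move=> lt_kL; rewrite /rev_ring modn_small. Qed.

Lemma is_ring_rev c : is_ring (rev_ring c).
Proof.
have [f_mod f_inj f_adj] := f_ring; split=> [k|i j|k]; rewrite /rev_ring ?modn_mod //.
  move=> /f_inj /eqP; rewrite eqn_modDl => /eqP.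
  move: (ltn_pmod i L_gt0) (ltn_pmod j L_gt0); set I := i %% L; set J := j %% L.
  move=> lt_IL lt_JL; case: (I =P 0) => [->|I_neq0]; case: (J =P 0) => [->|J_neq0] //;
    by rewrite ?subn0 ?modnn ?modn_small; lia.
have lt_kL := ltn_pmod k L_gt0.
have [lt_k1L|ge_k1L] := ltnP (k %% L).+1 L.
  have -> : k.+1 %% L = (k %% L).+1 by rewrite -addn1 -modnDml addn1 modn_small.
  rewrite e_sym.
  by have -> : c + (L - k %% L) = (c + (L - (k %% L).+1)).+1 by lia.
have -> : k.+1 %% L = 0 by rewrite -addn1 -modnDml addn1 (_ : (k %% L).+1 = L) ?modnn //; lia.
rewrite subn0 ring_addL e_sym.
by have -> : c + (L - k %% L) = c.+1 by lia.
Qed.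

Definition arc i r := [seq f (i + j) | j <- iota 0 r].

Lemma size_arc i r : size (arc i r) = r.
Proof. by rewrite size_map size_iota. Qed.

Lemma arc_cons i r : arc i r.+1 = f i :: arc i.+1 r.
Proof.
rewrite /arc /= addn0 -[iota 1 r]/(iota (1 + 0) r) iotaDl -map_comp; congr cons.
by apply: eq_map => j /=; rewrite add1n addnS.
Qed.

Lemma arc_uniq i r : r <= L -> uniq (arc i r).
Proof.
case: f_ring => _ f_inj _ le_rL; rewrite map_inj_in_uniq ?iota_uniq // => j j'.
rewrite !mem_iota !add0n => /andP[_ lt_j] /andP[_ lt_j'] /f_inj /eqP.
by rewrite eqn_modDl !modn_small ?(leq_trans lt_j) ?(leq_trans lt_j') // => /eqP.
Qed.

Lemma arc_path i r : path e (f i) (arc i.+1 r).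
Proof.
case: f_ring => _ _ f_adj; elim: r i => [//|r IHr] i.
by rewrite arc_cons /= f_adj IHr.
Qed.

Lemma last_arc i r : last (f i) (arc i.+1 r) = f (i + r).
Proof.
elim: r i => [|r IHr] i; first by rewrite addn0.
by rewrite arc_cons /= IHr addSnnS.
Qed.

Lemma is_cycle_arc i r : 3 <= r <= L -> e (f (i + r.-1)) (f i) ->
  is_cycle_of e (arc i r).
Proof.
case: r => [//|r] /andP[ge_r3 le_rL] e_close.
by rewrite /is_cycle_of arc_uniq // size_arc ge_r3 arc_cons /= rcons_path arc_path last_arc.
Qed.

End Rings.

Lemma is_cycle_arc_cat (T : finType) (e : rel T) (L : nat) (f g : nat -> T) i j r q :
  is_ring e L f -> is_ring e L g -> (forall k l, f k != g l) ->
  0 < r <= L -> 0 < q <= L -> 3 <= r + q ->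
  e (f (i + r.-1)) (g j) -> e (g (j + q.-1)) (f i) ->
  is_cycle_of e (arc f i r ++ arc g j q).
Proof.
move=> f_ring g_ring fg_disj /andP[r_gt0 le_rL] /andP[q_gt0 le_qL] ge_rq3 e_fg e_gf.
rewrite /is_cycle_of size_cat !size_arc ge_rq3 cat_uniq (arc_uniq f_ring) //.
rewrite (arc_uniq g_ring) //= andbT.
apply/andP; split.
  apply/hasPn => _ /mapP[k _ ->]; apply/mapP => -[l _ /eqP].
  by rewrite eq_sym (negbTE (fg_disj _ _)).
case: r q {ge_rq3} r_gt0 q_gt0 le_rL le_qL e_fg e_gf => [//|r] [//|q] _ _ _ _ e_fg e_gf.
rewrite /= in e_fg e_gf.
rewrite !arc_cons /= rcons_cat /= cat_path (arc_path f_ring) (last_arc f) /= e_fg.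
by rewrite rcons_path (arc_path g_ring) (last_arc g) e_gf.
Qed.

Lemma all_iota_ord n (P : pred nat) : all P (iota 0 n) -> forall t : 'I_n, P t.
Proof. by move/allP=> allP_n t; apply: allP_n; rewrite mem_iota ltn_ord. Qed.

Definition pentagon_adj (x y : nat) := (x.+1 == y %[mod 5]) || (y.+1 == x %[mod 5]).

(* Vertex [t < 5] at position [t] of an outer pentagon, vertex [t >= 5] at
   position [(t - 5) * d] of an inner one, spokes joining equal positions. *)
Definition petersen_model (d t t' : nat) : bool :=
  if t < 5 then
    if t' < 5 then pentagon_adj t t' else t * d == (t' - 5) * d %[mod 5]
  else if t' < 5 then (t - 5) * d == t' * d %[mod 5]
  else pentagon_adj ((t - 5) * d) ((t' - 5) * d).

Definition petersen_nat (t t' : nat) :=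
  ((t, t') \in petersen_edges) || ((t', t) \in petersen_edges).

Lemma petersen_modelE d : (d == 2) || (d == 3) ->
  forall t t' : 'I_10, petersen t t' = petersen_model d t t'.
Proof.
have table : all (fun d => all (fun t => all (fun t' =>
    petersen_nat t t' == petersen_model d t t') (iota 0 10)) (iota 0 10)) [:: 2; 3].
  by vm_compute.
move=> d23 t t'; have /allP/(_ d) := table; rewrite !inE => /(_ d23).
by move/all_iota_ord/(_ t)/all_iota_ord/(_ t')/eqP.
Qed.

Lemma petersen_twin_free (t t' : 'I_10) : petersen t =1 petersen t' -> t = t'.
Proof.
have table : all (fun t => all (fun t' => all (fun x =>
    petersen_nat t x == petersen_nat t' x) (iota 0 10) ==> (t == t')) (iota 0 10)) (iota 0 10).
  by vm_compute.
move=> twins; apply/val_inj/eqP; move: (all_iota_ord table t) => /all_iota_ord/(_ t').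
move/implyP; apply; apply/allP => x; rewrite mem_iota => /andP[_ lt_x].
by apply/eqP; exact: twins (Ordinal lt_x).
Qed.

Definition deleted_edge (T : eqType) (u v x y : T) :=
  ((x == u) && (y == v)) || ((x == v) && (y == u)).

Lemma deleted_edge_sym (T : eqType) (u v x y : T) :
  deleted_edge u v x y = deleted_edge u v y x.
Proof. by rewrite /deleted_edge orbC andbC [(y == v) && _]andbC. Qed.

Lemma deleted_edge_eq (T : eqType) (u v u' v' : T) :
  deleted_edge u v u' v' -> deleted_edge u v =2 deleted_edge u' v'.
Proof.
by case/orP=> /andP[/eqP-> /eqP->] x y //; rewrite /deleted_edge orbC.
Qed.

Lemma deleted_loop_irr (T : eqType) (e : rel T) : irreflexive e ->
  forall x y z, e y z = e y z && ~~ deleted_edge x x y z.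
Proof.
move=> e_irr x y z; case: (boolP (deleted_edge x x y z)) => [|_]; last by rewrite andbT.
by case/orP=> /andP[/eqP-> /eqP->]; rewrite e_irr.
Qed.

Section PermutationGraph.
Variables (T : finType) (e e0 m : rel T) (A B : seq T) (u v : T).
Hypothesis e0_perm : perm_structure e0 m A B.
(* [u = v] covers permutation graphs, where no edge is deleted. *)
Hypothesis uv_matched : u = v \/ m u v.
Hypothesis eE : forall x y, e x y = e0 x y && ~~ deleted_edge u v x y.
Hypothesis e_odd_girth : odd_girth e (#|T| %/ 2).

Local Notation L := (size A).
Local Notation deleted := (deleted_edge u v).

Lemma e0_sym : symmetric e0. Proof. by case: e0_perm => -[]. Qed.
Lemma e0_irr : irreflexive e0. Proof. by case: e0_perm => -[]. Qed.
Lemma e0_cubic : cubic e0. Proof. by case: e0_perm. Qed.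
Lemma m_sym : symmetric m. Proof. by case: e0_perm => _ _ []. Qed.
Lemma m_sub x y : m x y -> e0 x y. Proof. by case: e0_perm => _ _ [_ /(_ x y)]. Qed.
Lemma m_card x : #|[set y | m x y]| = 1. Proof. by case: e0_perm => _ _ []. Qed.
Lemma A_uniq : uniq A. Proof. by case: e0_perm => _ _ _ [[]]. Qed.
Lemma B_uniq : uniq B. Proof. by case: e0_perm => _ _ _ [[]]. Qed.
Lemma L_ge3 : 3 <= L. Proof. by case: e0_perm => _ _ _ [[]]. Qed.
Lemma B_size : size B = L. Proof. by case: e0_perm => _ _ _ [[_ _ _ -> ->]]. Qed.
Lemma AB_part x : (x \in A) != (x \in B). Proof. by case: e0_perm => _ _ _ [_ []]. Qed.
Lemma e0_cycles x y : (e0 x y && ~~ m x y) = cyc_adj A x y || cyc_adj B x y.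
Proof. by case: e0_perm => _ _ _ [_ []]. Qed.

Lemma L_gt0 : 0 < L. Proof. exact: leq_trans L_ge3. Qed.
Lemma B_gt0 : 0 < size B. Proof. by rewrite B_size L_gt0. Qed.

Lemma mem_AB x : (x \in A) || (x \in B).
Proof. by move: (AB_part x); case: (x \in A); case: (x \in B). Qed.

Lemma memA_B x : x \in A -> (x \in B) = false.
Proof. by move=> xA; move: (AB_part x); rewrite xA; case: (x \in B). Qed.

Lemma memB_A x : x \in B -> (x \in A) = false.
Proof. by move=> xB; move: (AB_part x); rewrite xB; case: (x \in A). Qed.

Lemma card_T : #|T| = L + L.
Proof.
rewrite -{2}B_size -(card_uniqP A_uniq) -(card_uniqP B_uniq) -cardUI.
have -> : #|[predI A & B]| = 0.
  by apply: eq_card0 => x; rewrite !inE; move: (AB_part x); case: (x \in A); case: (x \in B).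
by rewrite addn0; apply: eq_card => x; rewrite !inE mem_AB.
Qed.

Lemma half_card : #|T| %/ 2 = L.
Proof. by rewrite card_T addnn -muln2 mulnK. Qed.

Lemma odd_L : odd L.
Proof. by case: e_odd_girth => -[c [_ [odd_c]]]; rewrite half_card => <-. Qed.

Lemma odd_cycle_ge c : is_cycle_of e c -> odd (size c) -> L <= size c.
Proof. by case: e_odd_girth => _; rewrite half_card; apply. Qed.

Lemma e0E x y : e0 x y = [|| cyc_adj A x y, cyc_adj B x y | m x y].
Proof.
have := e0_cycles x y; case mxy: (m x y); first by rewrite m_sub ?orbT.
by rewrite andbT orbF => ->.
Qed.

Lemma m_not_cyc x y : m x y -> (cyc_adj A x y || cyc_adj B x y) = false.
Proof. by move=> mxy; rewrite -e0_cycles mxy andbF. Qed.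

Lemma m_irr x : m x x = false.
Proof. by apply/negP => /m_sub; rewrite e0_irr. Qed.

Lemma e_sym : symmetric e.
Proof. by move=> x y; rewrite !eE e0_sym deleted_edge_sym. Qed.

Lemma e_sub x y : e x y -> e0 x y.
Proof. by rewrite eE => /andP[]. Qed.

Lemma e_deg x : #|[set y | e x y]| <= 3.
Proof.
rewrite -(e0_cubic x); apply/subset_leq_card/subsetP => y.
by rewrite !inE; apply: e_sub.
Qed.

Lemma deleted_m x y : deleted x y -> e0 x y -> m x y.
Proof.
case: uv_matched => [<-|muv] /orP[]/andP[/eqP-> /eqP->]; rewrite ?e0_irr //.
by rewrite m_sym.
Qed.

Lemma e_cyc x y : cyc_adj A x y || cyc_adj B x y -> e x y.
Proof.
move=> cyc_xy; have e0xy : e0 x y by rewrite e0E orbA cyc_xy.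
rewrite eE e0xy; apply: contraTN cyc_xy => /deleted_m /(_ e0xy) /m_not_cyc ->.
by [].
Qed.

Definition mate x := odflt x [pick y | m x y].

Lemma m_mate x : m x (mate x).
Proof.
rewrite /mate; case: pickP => [//|no_mate].
have no_mates : [set y | m x y] = set0 by apply/setP => y; rewrite !inE no_mate.
by move: (m_card x); rewrite no_mates cards0.
Qed.

Lemma mate_eq x y : m x y -> y = mate x.
Proof.
move=> mxy; have [z mates_x] := mem_card1 (m_card x).
have := mates_x y; have := mates_x (mate x); rewrite !inE mxy m_mate.
by move=> /esym/eqP-> /esym/eqP->.
Qed.

Lemma mateK : involutive mate.
Proof. by move=> x; apply/esym/mate_eq; rewrite m_sym m_mate. Qed.

Lemma mate_inj : injective mate.
Proof. exact: inv_inj mateK. Qed.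

Lemma mate_neq x : mate x != x.
Proof. by apply: contraTneq (m_mate x) => ->; rewrite m_irr. Qed.

Lemma e_mate x : e x (mate x) = ~~ deleted x (mate x).
Proof. by rewrite eE m_sub ?m_mate. Qed.

Lemma deleted_mate_eq x y :
  deleted x (mate x) -> deleted y (mate y) -> (y == x) || (y == mate x).
Proof.
move=> /orP[]/andP[/eqP xu /eqP mxv] /orP[]/andP[/eqP yu /eqP myv];
  by rewrite yu mxv xu ?eqxx ?orbT.
Qed.

Definition a := cyc_nth u A.
Definition b := cyc_nth u B.

Lemma a_in k : a k \in A. Proof. exact: (mem_cyc_nth u L_gt0 k). Qed.
Lemma b_in k : b k \in B. Proof. exact: (mem_cyc_nth u B_gt0 k). Qed.
Lemma a_notB k : (a k \in B) = false. Proof. exact: memA_B (a_in k). Qed.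
Lemma b_notA k : (b k \in A) = false. Proof. exact: memB_A (b_in k). Qed.

Lemma a_neq_b k l : a k != b l.
Proof. by apply: contraFneq (a_notB k) => ->; apply: b_in. Qed.

Lemma a_eq i j : (a i == a j) = (i == j %[mod L]).
Proof. exact: (cyc_nth_eq u A_uniq L_gt0 i j). Qed.

Lemma b_eq i j : (b i == b j) = (i == j %[mod L]).
Proof. by rewrite -B_size; exact: (cyc_nth_eq u B_uniq B_gt0 i j). Qed.

Lemma a_adj i j : cyc_adj A (a i) (a j) = (a i.+1 == a j) || (a j.+1 == a i).
Proof. exact: (cyc_adj_cyc_nth u A_uniq L_gt0 i j). Qed.

Lemma b_adj i j : cyc_adj B (b i) (b j) = (b i.+1 == b j) || (b j.+1 == b i).
Proof. exact: (cyc_adj_cyc_nth u B_uniq B_gt0 i j). Qed.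

Lemma ring_a : is_ring e L a.
Proof.
split=> [k|i j /eqP|k]; first by rewrite /a cyc_nth_mod.
  by rewrite a_eq => /eqP.
by apply: e_cyc; rewrite a_adj eqxx.
Qed.

Lemma ring_b : is_ring e L b.
Proof.
split=> [k|i j /eqP|k]; first by rewrite -B_size /b cyc_nth_mod.
  by rewrite b_eq => /eqP.
by apply: e_cyc; rewrite b_adj eqxx !orbT.
Qed.

Lemma a_not_m k : ~~ m (a k) (a k.+1).
Proof. by apply/negP => /m_not_cyc; rewrite a_adj eqxx. Qed.

Lemma b_not_m k : ~~ m (b k) (b k.+1).
Proof. by apply/negP => /m_not_cyc; rewrite b_adj eqxx !orbT. Qed.

Section Chords.
Variable f : nat -> T.
Hypotheses (f_ring : is_ring e L f) (f_not_m : forall k, ~~ m (f k) (f k.+1)).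

(* A surviving chord [f i -- f j] closes, with one of the two arcs of the ring,
   an odd cycle shorter than [L]. *)
Lemma chord_not_edge i j : i < j < L -> m (f i) (f j) -> e (f i) (f j) -> False.
Proof.
move=> /andP[lt_ij lt_jL] mij eij; have oddL := odd_L; have L3 := L_ge3.
have [ji|ji] := eqVneq j i.+1; first by move: (f_not_m i); rewrite -ji mij.
have [jiL|jiL] := eqVneq (j - i) L.-1.
  have jL : j.+1 = i + L by lia.
  by move: (f_not_m j); rewrite jL (ring_addL f_ring) m_sym mij.
case odd_ji: (odd (j - i)).
  have cyc : is_cycle_of e (arc f j (L - (j - i)).+1).
    apply: (is_cycle_arc f_ring); first by apply/andP; split; lia.
    have -> : j + (L - (j - i)).+1.-1 = i + L by lia.
    by rewrite (ring_addL f_ring).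
  by have := odd_cycle_ge cyc; rewrite size_arc /= oddB ?odd_ji ?oddL //; lia.
have cyc : is_cycle_of e (arc f i (j - i).+1).
  apply: (is_cycle_arc f_ring); first by apply/andP; split; lia.
  by rewrite /= subnKC 1?e_sym // ltnW.
by have := odd_cycle_ge cyc; rewrite size_arc /= odd_ji; lia.
Qed.

Lemma chord_deleted i j : m (f i) (f j) -> deleted (f i) (f j).
Proof.
move=> mij; apply/negPn/negP => not_del.
have eij : e (f i) (f j) by rewrite eE m_sub.
have [f_mod _ _] := f_ring; rewrite -f_mod -[f j]f_mod in mij eij.
have [lt|gt|eq] := ltngtP (i %% L) (j %% L).
- by apply: (chord_not_edge _ mij eij); rewrite lt ltn_pmod ?L_gt0.
- apply: (chord_not_edge (i := j %% L) (j := i %% L)).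
  + by rewrite gt ltn_pmod ?L_gt0.
  + by rewrite m_sym.
  + by rewrite e_sym.
- by move: mij; rewrite eq m_irr.
Qed.

End Chords.

Lemma chordA x y : x \in A -> y \in A -> m x y -> deleted x y.
Proof.
move=> xA yA; rewrite -(cyc_nth_index u xA) -(cyc_nth_index u yA).
exact: chord_deleted ring_a a_not_m _ _.
Qed.

Lemma chordB x y : x \in B -> y \in B -> m x y -> deleted x y.
Proof.
move=> xB yB; rewrite -(cyc_nth_index u xB) -(cyc_nth_index u yB).
exact: chord_deleted ring_b b_not_m _ _.
Qed.

(* If [x] and its mate both lie in [X], then [X] also receives the mates of all
   of [Y], which is too many vertices. *)
Lemma mate_cross (X Y : seq T) x :
  uniq Y -> size Y = size X -> (forall z, z \in X -> z \notin Y) ->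
  (forall z, (z \in X) || (z \in Y)) ->
  (forall z, z \in X -> mate z \in X -> deleted z (mate z)) ->
  (forall z, z \in Y -> mate z \in Y -> deleted z (mate z)) ->
  x \in X -> mate x \in Y.
Proof.
move=> Y_uniq Y_size XY_disj XY_cover X_chord Y_chord xX.
apply/negPn/negP => mxY.
have mxX : mate x \in X by move: (XY_cover (mate x)); rewrite (negbTE mxY) orbF.
have Y_to_X y : y \in Y -> mate y \in X.
  move=> yY; apply/negPn/negP => myX.
  have myY : mate y \in Y by move: (XY_cover (mate y)); rewrite (negbTE myX).
  have /orP[] := deleted_mate_eq (X_chord _ xX mxX) (Y_chord _ yY myY) => /eqP yx.
  - by move: (XY_disj _ xX); rewrite -yx yY.
  - by move: (XY_disj _ mxX); rewrite -yx yY.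
have mates_uniq : uniq (x :: mate x :: map mate Y).
  rewrite /= (map_inj_uniq mate_inj) Y_uniq andbT !inE negb_or eq_sym mate_neq /=.
  apply/andP; split; apply/mapP => -[y yY].
  - by move=> /(congr1 mate); rewrite mateK => yx; move: (XY_disj _ mxX); rewrite yx yY.
  - by move/mate_inj => xy; move: (XY_disj _ xX); rewrite xy yY.
have mates_sub : {subset x :: mate x :: map mate Y <= X}.
  by move=> z; rewrite !inE => /or3P[/eqP->|/eqP->|/mapP[y /Y_to_X + ->]].
by have := uniq_leq_size mates_uniq mates_sub; rewrite /= size_map -Y_size; lia.
Qed.

Lemma mate_A x : x \in A -> mate x \in B.
Proof.
apply: mate_cross B_uniq B_size _ mem_AB _ _ => [z /memA_B ->|z zA mzA|z zB mzB] //.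
- exact: chordA (m_mate z).
- exact: chordB (m_mate z).
Qed.

Lemma mate_B x : x \in B -> mate x \in A.
Proof.
have cover z : (z \in B) || (z \in A) by rewrite orbC mem_AB.
apply: mate_cross A_uniq (esym B_size) _ cover _ _ => [z /memB_A ->|z zB mzB|z zA mzA] //.
- exact: chordB (m_mate z).
- exact: chordA (m_mate z).
Qed.

Definition spoke i := index (mate (a i)) B.

Lemma b_spoke i : b (spoke i) = mate (a i).
Proof. exact: (cyc_nth_index u (mate_A (a_in i))). Qed.

Lemma spoke_lt i : spoke i < L.
Proof. by rewrite -B_size index_mem mate_A ?a_in. Qed.

Lemma b_spoke_inj i j : b (spoke i) = b (spoke j) -> i = j %[mod L].
Proof. by rewrite !b_spoke => /mate_inj /eqP; rewrite a_eq => /eqP. Qed.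

Definition kept i := ~~ deleted (a i) (mate (a i)).

Lemma e_spoke i : kept i -> e (a i) (b (spoke i)).
Proof. by rewrite b_spoke e_mate. Qed.

(* Position on [A] of the deleted edge; meaningless for a permutation graph. *)
Definition k0 := (if u \in A then index u A else index v A) %% L.

Lemma k0_deleted : m u v -> deleted (a k0) (mate (a k0)).
Proof.
move=> muv; rewrite /k0 /a cyc_nth_mod.
have mvu : m v u by rewrite m_sym.
have [mu mv] : mate u = v /\ mate v = u by rewrite -(mate_eq muv) -(mate_eq mvu).
case: ifP => uA; first by rewrite (cyc_nth_index u uA) mu /deleted_edge !eqxx.
have vA : v \in A by rewrite -mu mate_B //; move: (mem_AB u); rewrite uA.
by rewrite (cyc_nth_index u vA) mv /deleted_edge !eqxx orbT.
Qed.

Lemma kept_off_k0 j : 0 < j < L -> kept (k0 + j).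
Proof.
move=> j_range; apply/negP => del; case: uv_matched => [uv|muv].
  move: del (mate_neq (a (k0 + j))); rewrite /deleted_edge -uv orbb.
  by case/andP=> /eqP-> /eqP->; rewrite eqxx.
have /orP[] := deleted_mate_eq (k0_deleted muv) del.
- by rewrite a_eq addn_eq_mod_small.
- by move=> /eqP aE; move: (mate_A (a_in k0)); rewrite -aE a_notB.
Qed.

Definition gap i := (spoke i.+1 + (L - spoke i)) %% L.

Lemma gap_lt i : gap i < L. Proof. exact: ltn_pmod _ L_gt0. Qed.

Lemma b_gap i : b (spoke i + gap i) = b (spoke i.+1).
Proof.
apply/eqP; rewrite b_eq /gap modnDmr.
have -> : spoke i + (spoke i.+1 + (L - spoke i)) = spoke i.+1 + L by have := spoke_lt i; lia.
by rewrite modnDr.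
Qed.

Lemma gap_neq0 i : gap i != 0.
Proof.
apply/eqP => gap0; have := b_gap i; rewrite gap0 addn0 => /b_spoke_inj /eqP.
by rewrite eq_sym -addn1 addn_eq_mod_small // (leq_trans _ L_ge3).
Qed.

Lemma b_gap2 i : b (spoke i + gap i + gap i.+1) = b (spoke i.+2).
Proof. by rewrite (ring_shift ring_b _ (b_gap i)) b_gap. Qed.

Lemma gap_sum_neq i : gap i + gap i.+1 != L.
Proof.
apply/eqP => gap_sum; have := b_gap2 i; rewrite -addnA gap_sum (ring_addL ring_b).
by move=> /b_spoke_inj /eqP; rewrite eq_sym -addn2 addn_eq_mod_small // L_ge3.
Qed.

Lemma odd_gap_le3 i : kept i -> kept i.+1 -> odd (gap i) -> gap i <= 3.
Proof.
move=> kept_i kept_i1 odd_gap; have := gap_lt i; have := gap_neq0 i.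
have oddL := odd_L; have L3 := L_ge3 => gap_neq0 lt_gapL.
have cyc : is_cycle_of e (arc a i 2 ++ arc b (spoke i.+1) (L - gap i).+1).
  apply: (is_cycle_arc_cat ring_a ring_b a_neq_b); rewrite ?addn1 ?e_spoke //; try lia.
  rewrite -(ring_shift ring_b _ (b_gap i)) -addnA subnKC ?(ltnW lt_gapL) //.
  by rewrite (ring_addL ring_b) e_sym e_spoke.
have := odd_cycle_ge cyc; rewrite size_cat !size_arc /= oddB ?oddL ?odd_gap //; lia.
Qed.

Lemma even_gap_ge i : kept i -> kept i.+1 -> ~~ odd (gap i) -> L <= (gap i).+3.
Proof.
move=> kept_i kept_i1 even_gap; have := gap_lt i; have := gap_neq0 i.
have L3 := L_ge3 => gap_neq0 lt_gapL.
have rev_a := is_ring_rev e_sym L_gt0 ring_a i.+1.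
have rev_a_neq_b k l : rev_ring L a i.+1 k != b l by apply: a_neq_b.
have cyc : is_cycle_of e (arc (rev_ring L a i.+1) 0 2 ++ arc b (spoke i) (gap i).+1).
  apply: (is_cycle_arc_cat rev_a ring_b rev_a_neq_b); try lia.
  - rewrite rev_ring_small; last by lia.
    have -> : i.+1 + (L - (0 + 2.-1)) = i + L by lia.
    by rewrite (ring_addL ring_a) e_spoke.
  - by rewrite /= b_gap (rev_ring0 ring_a) e_sym e_spoke.
have := odd_cycle_ge cyc; rewrite size_cat !size_arc /= (negbTE even_gap); lia.
Qed.

Lemma colourable_of_hamiltonian H : is_cycle_of e H -> size H = L + L ->
  three_edge_colourable e.
Proof.
case/and3P=> H_uniq H_size3 H_cycle H_size.
apply: (even_hamiltonian_colourable e_sym e_deg H_uniq _ H_cycle) => [x||//].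
- by apply: uniq_card_mem; rewrite // H_size card_T.
- by rewrite H_size addnn odd_double.
Qed.

(* A gap of [1] or [L - 1] lets the two rim cycles be joined by two spokes
   into a Hamiltonian cycle. *)
Lemma unit_gap_colourable i : kept i -> kept i.+1 -> (gap i == 1) || (gap i == L.-1) ->
  three_edge_colourable e.
Proof.
move=> kept_i kept_i1 /orP[/eqP gap1|/eqP gapL]; have L3 := L_ge3.
  have rev_b := is_ring_rev e_sym L_gt0 ring_b (spoke i).
  apply: (@colourable_of_hamiltonian (arc a i.+1 L ++ arc (rev_ring L b (spoke i)) 0 L)).
    apply: (is_cycle_arc_cat ring_a rev_b) => [k l|||||]; try lia.
    - exact: a_neq_b.
    - have -> : i.+1 + L.-1 = i + L by lia.
      by rewrite (ring_addL ring_a) (rev_ring0 ring_b) e_spoke.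
    - rewrite rev_ring_small; last by lia.
      have -> : spoke i + (L - (0 + L.-1)) = spoke i + gap i by lia.
      by rewrite b_gap e_sym e_spoke.
  by rewrite size_cat !size_arc.
apply: (@colourable_of_hamiltonian (arc a i.+1 L ++ arc b (spoke i) L)).
  apply: (is_cycle_arc_cat ring_a ring_b a_neq_b); try lia.
  - have -> : i.+1 + L.-1 = i + L by lia.
    by rewrite (ring_addL ring_a) e_spoke.
  - by rewrite -gapL b_gap e_sym e_spoke.
by rewrite size_cat !size_arc.
Qed.

Lemma no_equal_gaps i : 7 <= L -> kept i -> kept i.+1 -> kept i.+2 ->
  gap i = gap i.+1 -> (gap i == 3) || (gap i == L - 3) -> False.
Proof.
move=> L7 kept_i kept_i1 kept_i2 gap_eq /orP[]/eqP gapE; have oddL := odd_L;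
  have b_gap2E := b_gap2 i; rewrite -gap_eq gapE in b_gap2E.
  have cyc : is_cycle_of e (arc a i 3 ++ arc b (spoke i.+2) (L - 5)).
    apply: (is_cycle_arc_cat ring_a ring_b a_neq_b); try lia.
    - by rewrite addn2 e_spoke.
    - rewrite -(ring_shift ring_b _ b_gap2E).
      have -> : spoke i + 3 + 3 + (L - 5).-1 = spoke i + L by lia.
      by rewrite (ring_addL ring_b) e_sym e_spoke.
  by have := odd_cycle_ge cyc; rewrite size_cat !size_arc oddD oddB ?oddL //; lia.
have rev_a := is_ring_rev e_sym L_gt0 ring_a i.+2.
have rev_a_neq_b k l : rev_ring L a i.+2 k != b l by apply: a_neq_b.
have cyc : is_cycle_of e (arc (rev_ring L a i.+2) 0 3 ++ arc b (spoke i) (L - 5)).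
  apply: (is_cycle_arc_cat rev_a ring_b rev_a_neq_b); try lia.
  - rewrite rev_ring_small; last by lia.
    have -> : i.+2 + (L - (0 + 3).-1) = i + L by lia.
    by rewrite (ring_addL ring_a) e_spoke.
  - rewrite (rev_ring0 ring_a) -(ring_addL ring_b (spoke i + _)).
    have -> : spoke i + (L - 5).-1 + L = spoke i + (L - 3) + (L - 3) by lia.
    by rewrite b_gap2E e_sym e_spoke.
by have := odd_cycle_ge cyc; rewrite size_cat !size_arc oddD oddB ?oddL //; lia.
Qed.

Lemma e0_aa i j : e0 (a i) (a j) = (a i.+1 == a j) || (a j.+1 == a i).
Proof.
rewrite e0E -a_adj {2}/cyc_adj a_notB /=.
have -> : m (a i) (a j) = false.
  by apply/negP => /mate_eq aj; move: (mate_A (a_in i)); rewrite -aj a_notB.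
by rewrite orbF.
Qed.

Lemma e0_bb i j : e0 (b i) (b j) = (b i.+1 == b j) || (b j.+1 == b i).
Proof.
rewrite e0E -b_adj {1}/cyc_adj b_notA /=.
have -> : m (b i) (b j) = false.
  by apply/negP => /mate_eq bj; move: (mate_B (b_in i)); rewrite -bj b_notA.
by rewrite orbF.
Qed.

Lemma e0_ab i j : e0 (a i) (b j) = (b j == mate (a i)).
Proof.
rewrite e0E /cyc_adj b_notA a_notB /= !andbF /=.
by apply/idP/eqP => [/mate_eq //|->]; apply: m_mate.
Qed.

Section NotColourable.
Hypothesis e_not_colourable : ~ three_edge_colourable e.

Lemma gap_eq3_or_Lsub3 i : kept i -> kept i.+1 -> gap i = 3 \/ gap i = L - 3.
Proof.
move=> kept_i kept_i1; have oddL := odd_L; have := gap_lt i; have := gap_neq0 i.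
have /norP[/eqP gap_neq1 /eqP gap_neqL1] : ~~ ((gap i == 1) || (gap i == L.-1)).
  by apply/negP => /(unit_gap_colourable kept_i kept_i1).
case odd_gap: (odd (gap i)) => gap_neq0 lt_gapL.
  have [gap2|] : gap i = 2 \/ gap i = 3 by have := odd_gap_le3 kept_i kept_i1 odd_gap; lia.
    by rewrite gap2 in odd_gap.
  by left.
have [gapL2|] : gap i = L - 2 \/ gap i = L - 3.
  by have := even_gap_ge kept_i kept_i1 (negbT odd_gap); lia.
  by move: odd_gap; rewrite gapL2 oddB ?oddL //; lia.
by right.
Qed.

Lemma kept_after_k0 t : t.+1 < L -> kept (k0.+1 + t).
Proof. by move=> lt_tL; rewrite addSnnS; apply: kept_off_k0; lia. Qed.

Lemma L_eq5 : L = 5.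
Proof.
have oddL := odd_L; have L3 := L_ge3.
have kept1 : kept k0.+1 by rewrite -[k0.+1]addn0 kept_after_k0 //; lia.
have kept2 : kept k0.+2 by rewrite -addn1 addSn kept_after_k0 //; lia.
have gap1 := gap_eq3_or_Lsub3 kept1 kept2.
have [L_eq3|[//|L_ge7]] : L = 3 \/ L = 5 \/ 7 <= L.
- have [lt_L7|] := ltnP L 7; last by right; right.
  have : L = 3 \/ L = 4 \/ L = 5 \/ L = 6 by lia.
  by case=> [|[L4|[|L6]]]; [left|rewrite L4 in oddL|right; left|rewrite L6 in oddL].
- by have := gap_lt k0.+1; have := gap_neq0 k0.+1; case: gap1 => ->; rewrite L_eq3.
have kept3 : kept k0.+3 by rewrite -addn2 addSn kept_after_k0 //; lia.
have gap2 := gap_eq3_or_Lsub3 kept2 kept3.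
case: (no_equal_gaps L_ge7 kept1 kept2 kept3).
- by have := gap_sum_neq k0.+1; case: gap1 => ->; case: gap2 => ->; lia.
- by case: gap1 => ->; rewrite eqxx ?orbT.
Qed.

Lemma gap_succ i : kept i -> kept i.+1 -> kept i.+2 -> gap i.+1 = gap i.
Proof.
move=> kept_i kept_i1 kept_i2; have := gap_sum_neq i; have := L_eq5.
case: (gap_eq3_or_Lsub3 kept_i kept_i1) => ->;
  by case: (gap_eq3_or_Lsub3 kept_i1 kept_i2) => ->; lia.
Qed.

Definition c0 := spoke k0.+1.
Definition d0 := gap k0.+1.

Lemma d0_range : (d0 == 2) || (d0 == 3).
Proof.
have L5 := L_eq5.
have kept1 : kept k0.+1 by rewrite -[k0.+1]addn0 kept_after_k0 //; lia.
have kept2 : kept k0.+2 by rewrite -addn1 addSn kept_after_k0 //; lia.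
by case: (gap_eq3_or_Lsub3 kept1 kept2); rewrite /d0 ?L5 => ->.
Qed.

Lemma gap_k0 t : t <= 2 -> gap (k0.+1 + t) = d0.
Proof.
have L5 := L_eq5; elim: t => [|t IHt] le_t2; first by rewrite addn0.
have kept0 : kept (k0.+1 + t) by rewrite kept_after_k0 //; lia.
have kept1 : kept (k0.+1 + t).+1 by rewrite -addnS kept_after_k0 //; lia.
have kept2 : kept (k0.+1 + t).+2 by rewrite -!addnS kept_after_k0 //; lia.
by rewrite addnS gap_succ // IHt // ltnW.
Qed.

Lemma b_spoke_k0_le3 t : t <= 3 -> b (spoke (k0.+1 + t)) = b (c0 + t * d0).
Proof.
elim: t => [|t IHt] le_t3; first by rewrite addn0 mul0n addn0.
rewrite addnS -b_gap gap_k0 // (ring_shift ring_b _ (IHt (ltnW le_t3))).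
by rewrite mulSnr addnA.
Qed.

(* The spoke at [k0 + 5 = k0] may be the deleted one, so its position is
   forced by injectivity of the spokes rather than by a gap. *)
Lemma b_spoke_k0 t : t <= 4 -> b (spoke (k0.+1 + t)) = b (c0 + t * d0).
Proof.
rewrite leq_eqVlt ltnS => /orP[/eqP->|]; last exact: b_spoke_k0_le3.
have L5 := L_eq5; have spoke4_lt := spoke_lt (k0.+1 + 4); rewrite L5 in spoke4_lt.
have c0_lt : c0 < 5 by rewrite -L5 spoke_lt.
have spoke4_neq s : s <= 3 -> spoke (k0.+1 + 4) != (c0 + s * d0) %% 5.
  move=> le_s3; apply/eqP => spoke4E.
  have := b_spoke_k0_le3 le_s3; rewrite -[b (c0 + _)](ring_mod ring_b) L5 -spoke4E.
  by move=> /b_spoke_inj /eqP; rewrite eqn_modDl L5 !modn_small //; lia.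
rewrite (residues_mod5 c0_lt spoke4_lt _ spoke4_neq).
- by rewrite -L5 (ring_mod ring_b).
- by case/orP: d0_range => /eqP->.
Qed.

Definition petersen_embed (t : 'I_10) : T :=
  if t < 5 then a (k0.+1 + t) else b (c0 + (t - 5) * d0).

Lemma e0_petersen_embed t t' :
  e0 (petersen_embed t) (petersen_embed t') = petersen t t'.
Proof.
have L5 := L_eq5; have lt_t := ltn_ord t; have lt_t' := ltn_ord t'.
rewrite (petersen_modelE d0_range) /petersen_embed /petersen_model.
case: ifP => lt_t5; case: ifP => lt_t'5.
- by rewrite e0_aa !a_eq L5 -!addnS !eqn_modDl.
- by rewrite e0_ab -b_spoke b_spoke_k0 ?b_eq ?L5 ?eqn_modDl 1?eq_sym //; lia.
- by rewrite e0_sym e0_ab -b_spoke b_spoke_k0 ?b_eq ?L5 ?eqn_modDl //; lia.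
- by rewrite e0_bb !b_eq L5 -!addnS !eqn_modDl.
Qed.

Lemma petersen_embed_inj : injective petersen_embed.
Proof.
move=> t t' embed_eq; apply: petersen_twin_free => x.
by rewrite -!e0_petersen_embed embed_eq.
Qed.

Lemma petersen_embed_bij : bijective petersen_embed.
Proof.
have card_le : #|T| <= #|'I_10| by rewrite card_ord card_T L_eq5.
exact: inj_card_bij petersen_embed_inj card_le.
Qed.

Definition i4 : 'I_10 := inord 4.
Definition i9 : 'I_10 := inord 9.

Lemma petersen_embed_deleted : m u v ->
  deleted =2 deleted_edge (petersen_embed i4) (petersen_embed i9).
Proof.
have embed4 : petersen_embed i4 = a k0.
  by rewrite /petersen_embed inordK //= addSnnS -L_eq5 (ring_addL ring_a).
have embed9 : petersen_embed i9 = mate (a k0).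
  rewrite /petersen_embed inordK //= -b_spoke_k0 // b_spoke.
  by rewrite addSnnS -L_eq5 (ring_addL ring_a).
by move=> muv; rewrite embed4 embed9; apply: deleted_edge_eq; apply: k0_deleted.
Qed.

Lemma e_petersen_embed : u = v ->
  forall t t', e (petersen_embed t) (petersen_embed t') = petersen t t'.
Proof.
move=> uv t t'; rewrite eE e0_petersen_embed /deleted_edge -uv orbb.
case: (boolP ((petersen_embed t == u) && _)) => [/andP[/eqP tu /eqP t'u]|_].
  have tt' : t = t' by apply: petersen_embed_inj; rewrite tu t'u.
  by rewrite -tt' -e0_petersen_embed e0_irr.
by rewrite andbT.
Qed.

Lemma e_petersen_embed_minus : m u v ->
  forall t t', e (petersen_embed t) (petersen_embed t') = petersen_minus i4 i9 t t'.
Proof.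
move=> muv t t'; rewrite eE e0_petersen_embed (petersen_embed_deleted muv).
by rewrite /deleted_edge !(inj_eq petersen_embed_inj).
Qed.

End NotColourable.

End PermutationGraph.

Lemma graph_iso_of_bij (T : finType) (e : rel T) (f : rel 'I_10) (h : 'I_10 -> T) :
  bijective h -> (forall t t', e (h t) (h t') = f t t') -> graph_iso e f.
Proof.
case=> g hK gK e_h; exists g; split; first by exists h.
by move=> x y; rewrite -e_h !gK.
Qed.

Unset Implicit Arguments.

Theorem mainTheorem3 (T : finType) (e : rel T)
  (HG : permutation_graph e \/ near_permutation_graph e)
  (Hog : odd_girth e (#|T| %/ 2))
  (Hnc : ~ three_edge_colourable e) :
  graph_iso e petersen \/
  exists u v : 'I_10, petersen u v /\ graph_iso e (petersen_minus u v).
Proof.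
case: HG => [[m [[|x A] [B e_perm]]]|[e0 [m [A [B [u [v [e0_perm muv eE]]]]]]]].
- by case: e_perm => _ _ _ [[]].
- have /deleted_loop_irr/(_ x) eE : irreflexive e by case: e_perm => -[].
  left; apply: graph_iso_of_bij (petersen_embed_bij e_perm (or_introl erefl) eE Hog Hnc) _.
  exact: e_petersen_embed e_perm (or_introl erefl) eE Hog Hnc erefl.
- right; exists i4, i9; split; first by rewrite /petersen /i4 /i9 !inordK.
  apply: graph_iso_of_bij (petersen_embed_bij e0_perm (or_intror muv) eE Hog Hnc) _.
  exact: e_petersen_embed_minus e0_perm (or_intror muv) eE Hog Hnc muv.
Qed.
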